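(* Let $k\ge2$, $n\ge k$, $\beta=\sum_{i=1}^n i^{k-1}$ and $c_i=i^{k-1}/\beta$ for $i=1,\dots,n$. In the position-randomized auction setting described in the context, if the $k-1$ disadvantaged bidders all use the initial bid sequence $c_1,\dots,c_n$ and the uniform distribution on permutations, then for every position-randomized strategy of the adversary ${\mathcal A}$, the expected number of objects ${\mathcal A}$ wins is at most $\frac{\beta-1}{n^{k-1}}$.
   Context: Auction model: there are $k$ bidders, one adversary ${\mathcal A}$ and $k-1$ disadvantaged bidders, and $n$ objects auctioned simultaneously. Each object is won by the highest bidder on it; if $m$ bidders tie for the highest bid, each wins with probability $1/m$. A position-randomized bidding algorithm: a bidder chooses an initial sequence $x_1,\dots,x_n$ of positive reals with $\sum x_j\le 1$ (budget) and a probability distribution on permutations $\sigma$ of $\{1,\dots,n\}$; he draws $\sigma$ and bids $x_j$ on object $\sigma(j)$. The disadvantaged bidders draw their permutations independently of each other, and ${\mathcal A}$'s permutation is drawn independently of theirs. *)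

From HB Require Import structures.
From mathcomp Require Import all_boot all_order all_algebra all_fingroup.
Set Implicit Arguments. Unset Strict Implicit. Unset Printing Implicit Defensive.
Import Order.TTheory GRing.Theory Num.Theory.
Local Open Scope ring_scope.

(* Objects and positions are indexed by 'I_n; position i (0-based) corresponds
   to the paper's index i+1.  A bidder with initial sequence x and permutation
   s bids x i on object s i, i.e. bids x (s^-1 o) on object o. *)

Definition beta (R : realFieldType) (k n : nat) : R :=
  \sum_(i < n) (i.+1)%:R ^+ (k.-1).

Definition cseq (R : realFieldType) (k n : nat) (i : 'I_n) : R :=
  (i.+1)%:R ^+ (k.-1) / beta R k n.

Definition win_share (R : realFieldType) (a : R) (bs : seq R) : R :=
  if has (fun b => a < b) bs then 0
  else 1 / (1 + count (fun b => b == a) bs)%:R.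

Notation profile k n := {ffun 'I_(k.-1) -> 'S_n}.

(* Expected number of objects won by the adversary, when it uses initial
   sequence x and permutation distribution p, and the k-1 disadvantaged
   bidders use initial sequence cseq and independent uniform permutations. *)
Definition expected_wins (R : realFieldType) (k n : nat)
    (x : 'I_n -> R) (p : {ffun 'S_n -> R}) : R :=
  \sum_(s : 'S_n) p s *
    ((\sum_(t : profile k n) \sum_(o : 'I_n)
        win_share (x ((s^-1)%g o))
          [seq @cseq R k n (((t j)^-1)%g o) | j <- enum 'I_(k.-1)])
     / #|{: profile k n}|%:R).

From HB Require Import structures.
From mathcomp Require Import all_boot all_order all_algebra all_fingroup.
From mathcomp Require Import zify lra.
Set Implicit Arguments. Unset Strict Implicit. Unset Printing Implicit Defensive.
Import Order.TTheory GRing.Theory Num.Theory.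
Local Open Scope ring_scope.

(* For a fixed bid a of the adversary, the opponents' positions are independent
   and uniform, so the chance that a wins is at most a product over opponents
   of the fraction of weights c_i below a (a tie with one chosen opponent
   counting 1/2), hence at most M^(k-1) / n^(k-1) with M = #{i | c_i <= a}.
   As c_M <= a, M^(k-1) <= beta a; summing over the bids x_i bounds the
   natural number \sum_i M(x_i)^(k-1) by beta, and it can only reach beta if
   every x_i equals some c_j, in which case the n >= 2 discounts of 1/2 give
   back at least 1. *)

Section UniformPermutations.
Variables (R : realFieldType) (n : nat).

Lemma sum_perm_inv_indep (h : 'I_n -> R) (o o' : 'I_n) :
  \sum_(s : 'S_n) h ((s^-1)%g o) = \sum_(s : 'S_n) h ((s^-1)%g o').
Proof.
rewrite (reindex_inj (mulIg (tperm o o'))) /=.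
by apply: eq_bigr => s _; rewrite invgM permM tpermV tpermL.
Qed.

Lemma mean_perm_inv (h : 'I_n -> R) (o : 'I_n) :
  (\sum_(s : 'S_n) h ((s^-1)%g o)) / n`!%:R = (\sum_i h i) / n%:R.
Proof.
have n_gt0 : (0 < n)%N by case: n o => [[]|].
have avg : n%:R * \sum_(s : 'S_n) h ((s^-1)%g o) = n`!%:R * \sum_i h i.
  transitivity (\sum_(o' : 'I_n) \sum_(s : 'S_n) h ((s^-1)%g o')).
    rewrite [RHS](eq_bigr (fun _ => \sum_(s : 'S_n) h ((s^-1)%g o))).
      by rewrite sumr_const card_ord mulr_natl.
    by move=> o' _; exact: sum_perm_inv_indep.
  rewrite exchange_big /= -[in RHS]card_Sn mulr_natl -sumr_const.
  by apply: eq_bigr => s _; rewrite [RHS](reindex_inj (@perm_inj _ (s^-1)%g)).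
apply/eqP; rewrite eqr_div ?pnatr_eq0 -?lt0n ?fact_gt0 //.
by rewrite mulrC avg mulrC.
Qed.

Lemma mean_profile_prod m (f : 'I_m -> 'I_n -> R) (o : 'I_n) :
  (\sum_(t : {ffun 'I_m -> 'S_n}) \prod_j f j (((t j)^-1)%g o))
    / #|{: {ffun 'I_m -> 'S_n}}|%:R
  = \prod_j ((\sum_i f j i) / n%:R).
Proof.
rewrite -(bigA_distr_bigA (fun j (s : 'S_n) => f j ((s^-1)%g o))) /=.
rewrite card_ffun card_Sn card_ord natrX.
have -> : n`!%:R ^+ m = \prod_(j < m) n`!%:R :> R.
  by rewrite prodr_const card_ord.
by rewrite -prodf_div; apply: eq_bigr => j _; exact: mean_perm_inv.
Qed.

End UniformPermutations.

Section Score.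
Variable R : realFieldType.

Definition score (tie a b : R) : R :=
  if b < a then 1 else if b == a then tie else 0.

(* Only ties with the first opponent are discounted: this keeps the bound a
   product of factors depending on one opponent each, and a single factor
   1/2 is all that the extremal case of the counting argument needs. *)
Definition tie_weight {K} (j : 'I_K.+1) : R := if j == ord0 then 1 / 2 else 1.

Lemma tie_weight_in01 K (j : 'I_K.+1) : 0 <= tie_weight j <= 1.
Proof. by rewrite /tie_weight; case: eqP => _; apply/andP; split; lra. Qed.

Lemma win_share_le_prod_score K (a : R) (f : 'I_K.+1 -> R) :
  win_share a [seq f j | j <- enum 'I_K.+1]
    <= \prod_j score (tie_weight j) a (f j).
Proof.
rewrite /win_share; case: hasP => [[_ /mapP[j _ ->] a_lt]|no_higher].
  by rewrite (bigD1 j) //= /score ltNge (ltW a_lt) gt_eqF // mul0r.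
have f_le j : f j <= a.
  by rewrite leNgt; apply/negP => lt_a; apply: no_higher; exists (f j);
    rewrite ?map_f ?mem_enum.
rewrite (bigD1 ord0) //= big1 ?mulr1 => [|j /negbTE j_ne0]; last first.
  rewrite /score /tie_weight j_ne0.
  by have := f_le j; rewrite le_eqVlt => /orP[/eqP->|->]; rewrite ?ltxx ?eqxx.
set m := count _ _.
have m_pos : 0 < (1 + m)%:R :> R by rewrite ltr0n.
rewrite /score /tie_weight eqxx; case: ltP => [_ | ge_a].
  by rewrite ler_pdivrMr // mul1r ler1n.
have f0E : f ord0 = a by apply/eqP; rewrite eq_le f_le ge_a.
have m_ge1 : (0 < m)%N.
  rewrite -has_count; apply/hasP; exists (f ord0); last by rewrite /= f0E.
  by rewrite map_f ?mem_enum.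
have : 2 <= (1 + m)%:R :> R by rewrite ler_nat; lia.
by rewrite f0E eqxx ler_pdivrMr //; lra.
Qed.

Lemma score_le_indicator tie : 0 <= tie <= 1 ->
  forall a b, 0 <= score tie a b <= (if b <= a then 1 else 0).
Proof.
by move=> tie01 a b; rewrite /score; case: (ltgtP b a); rewrite ?ler01 ?lexx.
Qed.

Variable n : nat.
Implicit Types (f : 'I_n -> R) (a : R).

Definition card_atmost f a : nat := #|[pred i | f i <= a]|.

Lemma card_atmostE f a :
  (card_atmost f a)%:R = \sum_i (if f i <= a then 1 else 0) :> R.
Proof. by rewrite /card_atmost -sum1_card natr_sum big_mkcond. Qed.

Lemma sum_score_le tie f a : 0 <= tie <= 1 ->
  0 <= \sum_i score tie a (f i) <= (card_atmost f a)%:R.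
Proof.
move=> tie01; rewrite sumr_ge0 => [|i _]; last first.
  by case/andP: (score_le_indicator tie01 a (f i)).
rewrite card_atmostE.
by apply: ler_sum => i _; case/andP: (score_le_indicator tie01 a (f i)).
Qed.

Lemma sum_score_half_le f a i0 : f i0 = a ->
  \sum_i score (1 / 2) a (f i) <= (card_atmost f a)%:R - 1 / 2.
Proof.
move=> fi0E; have half01 : 0 <= (1 / 2 : R) <= 1 by apply/andP; split; lra.
rewrite card_atmostE (bigD1 i0) //= [X in _ <= X - _](bigD1 i0) //=.
rewrite /score fi0E ltxx eqxx lexx.
suff: \sum_(i | i != i0) score (1 / 2) a (f i)
        <= \sum_(i | i != i0) (if f i <= a then 1 else 0 : R) by lra.
by apply: ler_sum => i _; case/andP: (score_le_indicator half01 a (f i));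
  case: (f i <= a).
Qed.

(* [win_weight K f a / n ^ K.+1] bounds the chance that the bid [a] wins
   against [K.+1] opponents bidding independent uniform entries of [f]. *)
Definition win_weight K f a : R :=
  \prod_(j < K.+1) \sum_i score (tie_weight j) a (f i).

Lemma win_weight_le K f a : win_weight K f a <= (card_atmost f a ^ K.+1)%:R.
Proof.
rewrite natrX -[X in _ ^+ X](card_ord K.+1) -prodr_const.
by apply: ler_prod => j _; apply/sum_score_le/tie_weight_in01.
Qed.

Lemma win_weight_tie_le K f a i0 : f i0 = a ->
  win_weight K f a <= (card_atmost f a ^ K.+1)%:R - 1 / 2.
Proof.
move=> fi0E; set M : R := (card_atmost f a)%:R.
have M_ge1 : 1 <= M.
  rewrite ler1n lt0n; apply/eqP => /card0_eq /(_ i0).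
  by rewrite inE fi0E lexx.
set S := fun j : 'I_K.+1 => \sum_i score (tie_weight j) a (f i).
have S_in j : 0 <= S j <= M by apply/sum_score_le/tie_weight_in01.
have first_le : S ord0 <= M - 1 / 2.
  by rewrite /S /tie_weight eqxx; exact: sum_score_half_le fi0E.
have others_le : \prod_(j | j != ord0) S j <= M ^+ K.
  have -> : M ^+ K = \prod_(j < K.+1 | j != ord0) M.
    by rewrite prodr_const cardC1 card_ord.
  by apply: ler_prod => j _; exact: S_in.
have others_ge0 : 0 <= \prod_(j | j != ord0) S j.
  by apply: prodr_ge0 => j _; case/andP: (S_in j).
have MK_ge1 : 1 <= M ^+ K by rewrite exprn_ege1.
have S0_ge0 : 0 <= S ord0 by case/andP: (S_in ord0).
rewrite /win_weight -/S (bigD1 ord0) //= natrX -/M exprS.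
apply: le_trans (_ : (M - 1 / 2) * M ^+ K <= _); last by nra.
by apply: ler_pM.
Qed.

End Score.

Arguments tie_weight {R K}.

Lemma card_le_succ_max n (P : pred 'I_n) :
  (0 < #|P|)%N -> exists2 i : 'I_n, P i & (#|P| <= i.+1)%N.
Proof.
move/card_gt0P => [i0 Pi0]; have [i Pi max_i] := arg_maxnP val Pi0.
exists i => //; rewrite cardE -(size_map val) -(size_iota 0 i.+1).
apply: uniq_leq_size => [|v /mapP[j]].
  by rewrite (map_inj_uniq val_inj) enum_uniq.
by rewrite mem_enum mem_iota => /max_i j_le_i ->.
Qed.

Section CseqCounting.
Variables (R : realFieldType) (K n : nat).
Hypothesis n_gt0 : (0 < n)%N.
Let c := @cseq R K.+2 n.
Let b := beta R K.+2 n.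

Lemma beta_natE : b = (\sum_(i < n) i.+1 ^ K.+1)%N%:R.
Proof. by rewrite /b /beta natr_sum; apply: eq_bigr => i _; rewrite natrX. Qed.

Lemma beta_gt0 : 0 < b.
Proof. by rewrite beta_natE ltr0n (bigD1 (Ordinal n_gt0)) //= exp1n. Qed.

Lemma cseq_le i a : (c i <= a) = ((i.+1 ^ K.+1)%:R <= b * a).
Proof. by rewrite /c /cseq ler_pdivrMr ?beta_gt0 // natrX mulrC. Qed.

Lemma card_atmost_cseq_le a : 0 <= a -> (card_atmost c a ^ K.+1)%:R <= b * a.
Proof.
move=> a_ge0; case: (posnP (card_atmost c a)) => [-> | M_gt0].
  by rewrite exp0n // mulr_ge0 // ltW // beta_gt0.
have [i ci_le M_le] := card_le_succ_max M_gt0.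
apply: le_trans (_ : (i.+1 ^ K.+1)%:R <= _); last by rewrite -cseq_le.
by rewrite ler_nat leq_exp2r.
Qed.

Lemma cseq_tight a : 0 < a ->
  (card_atmost c a ^ K.+1)%:R = b * a -> exists i0, c i0 = a.
Proof.
move=> a_gt0 tight; set M := card_atmost c a in tight.
have M_gt0 : (0 < M)%N.
  rewrite lt0n; apply/eqP => M0; move: tight; rewrite M0 exp0n // => /eqP.
  by rewrite eq_sym mulf_eq0 !gt_eqF ?beta_gt0.
have M_le_n : (M.-1 < n)%N by rewrite prednK // -[n]card_ord max_card.
exists (Ordinal M_le_n); rewrite /c /cseq /= prednK // -natrX tight.
by rewrite -/b mulrAC divff ?mul1r // gt_eqF ?beta_gt0.
Qed.

End CseqCounting.

(* Either every bound [T i <= b y i] is tight, and then the [n >= 2] losses of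
   1/2 add up to at least 1, or one of them is strict, and then the natural
   number [\sum_i T i] is smaller than [b]. *)
Lemma sum_le_pred_of_nat_bounds (R : realFieldType) n (b : nat)
    (y w : 'I_n -> R) (T : 'I_n -> nat) :
  (2 <= n)%N -> \sum_i y i <= 1 ->
  (forall i, (T i)%:R <= b%:R * y i) ->
  (forall i, w i <= (T i)%:R) ->
  (forall i, (T i)%:R = b%:R * y i -> w i <= (T i)%:R - 1 / 2) ->
  \sum_i w i <= b%:R - 1.
Proof.
move=> n_ge2 y_le1 T_le w_le w_tight.
have by_le_b : b%:R * \sum_i y i <= b%:R :> R.
  by rewrite -[X in _ <= X]mulr1 ler_wpM2l ?ler0n.
case: (boolP [forall i, (T i)%:R == b%:R * y i :> R]) => [/forallP all_tight|].
  apply: le_trans (_ : \sum_i (b%:R * y i - 1 / 2) <= _).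
    apply: ler_sum => i _; have /eqP tight_i := all_tight i.
    by rewrite -tight_i w_tight.
  rewrite sumrB -mulr_sumr sumr_const card_ord -mulr_natr.
  have : 2 <= n%:R :> R by rewrite ler_nat.
  lra.
case/forallPn => i0 /negP not_tight.
have sumT_lt : (\sum_i T i)%:R < b%:R * \sum_i y i :> R.
  rewrite natr_sum mulr_sumr (bigD1 i0) //= [X in _ < X](bigD1 i0) //=.
  apply: ltr_leD; first by rewrite lt_neqAle T_le andbT; apply/negP.
  by apply: ler_sum => i _; exact: T_le.
have sumT_le : (\sum_i T i)%:R <= b%:R - 1 :> R.
  have : (\sum_i T i + 1 <= b)%N.
    by rewrite addn1 -(ltr_nat R); apply: lt_le_trans by_le_b.
  by rewrite -(ler_nat R) natrD; lra.
apply: le_trans sumT_le; rewrite natr_sum.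
by apply: ler_sum => i _; exact: w_le.
Qed.

Lemma mean_win_share_le (R : realFieldType) K n (f x : 'I_n -> R) (s : 'S_n) :
  (\sum_(t : {ffun 'I_K.+1 -> 'S_n}) \sum_(o : 'I_n)
      win_share (x ((s^-1)%g o)) [seq f (((t j)^-1)%g o) | j <- enum 'I_K.+1])
    / #|{: {ffun 'I_K.+1 -> 'S_n}}|%:R
  <= (\sum_i win_weight K f (x i)) / n%:R ^+ K.+1.
Proof.
set N := #|{: {ffun 'I_K.+1 -> 'S_n}}|%:R.
have N_gt0 : 0 < N.
  by rewrite ltr0n card_ffun card_Sn card_ord expn_gt0 fact_gt0.
apply: le_trans (_ : _ <= (\sum_(t : {ffun 'I_K.+1 -> 'S_n}) \sum_(o : 'I_n)
   \prod_j score (tie_weight j) (x ((s^-1)%g o)) (f (((t j)^-1)%g o))) / N) _.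
  rewrite ler_pM2r ?invr_gt0 //; apply: ler_sum => t _; apply: ler_sum => o _.
  exact: win_share_le_prod_score.
rewrite exchange_big /= mulr_suml (reindex_inj (@perm_inj _ s)) mulr_suml.
apply: ler_sum => o _; rewrite permK.
rewrite (mean_profile_prod (fun j i => score (tie_weight j) (x o) (f i))).
by rewrite prodf_div prodr_const card_ord.
Qed.

Theorem lemma4p4 (R : realFieldType) (k n : nat)
  (hk : (2 <= k)%N) (hn : (k <= n)%N)
  (x : 'I_n -> R) (hxpos : forall i, 0 < x i) (hxsum : \sum_(i < n) x i <= 1)
  (p : {ffun 'S_n -> R}) (hp0 : forall s, 0 <= p s) (hp1 : \sum_(s : 'S_n) p s = 1) :
  expected_wins k x p <= (beta R k n - 1) / (n%:R ^+ (k.-1)).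
Proof.
case: k hk hn => [|[|K]] // _ hn /=.
have n_gt0 : (0 < n)%N by lia.
set c := @cseq R K.+2 n.
have total : \sum_i win_weight K c (x i) <= beta R K.+2 n - 1.
  rewrite beta_natE //.
  apply: (sum_le_pred_of_nat_bounds (y := x)
      (T := fun i => (card_atmost c (x i) ^ K.+1)%N)) => // [|i|i|i].
  - by lia.
  - by rewrite -beta_natE ?card_atmost_cseq_le ?ltW.
  - exact: win_weight_le.
  rewrite -beta_natE // => /(cseq_tight n_gt0 (hxpos i)) [i0 ci0].
  exact: win_weight_tie_le ci0.
set B := (beta R K.+2 n - 1) / n%:R ^+ K.+1.
apply: le_trans (_ : \sum_(s : 'S_n) p s * B <= _).
  apply: ler_sum => s _; apply: ler_wpM2l => //.
  apply: le_trans (mean_win_share_le _ _ _ s) _.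
  by rewrite ler_pM2r ?invr_gt0 ?exprn_gt0 ?ltr0n.
by rewrite -mulr_suml hp1 mul1r.
Qed.
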